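(* Consider the parametrized system $A\,(c\circ x^B)=0$ with $\ell$ classes as in the context, and assume: (i) $\ker A\cap\mathbb{R}^m_{>0}\neq\emptyset$; (ii) $d=d_1+\cdots+d_\ell$; (iii) for every $j=1,\dots,\ell$: $d_j=\dim P_j\le1$, and if $d_j=1$ then $\sum_{i'=1}^{i}\tilde b^j_{i'}\ge0$ for all $i=1,\dots,\omega_j-1$ (or $\le0$ for all such $i$) and $\tilde b^j_1\cdot\tilde b^j_{\omega_j}<0$. Then $|Y_c|=1$ for all $c\in\mathbb{R}^m_{>0}$.
   Context: Notation: for $x\in\mathbb{R}^n_{>0}$ and $y\in\mathbb{R}^n$, $x^y=\prod_i x_i^{y_i}$; for $B=(b^1,\dots,b^m)$, $x^B$ has entries $x^{b^j}$; $\circ$ is the componentwise product; $(\cdot)^{-1}$ of a positive vector is componentwise; $1_k$ is the all-ones vector in $\mathbb{R}^k$. Setting with classes: $A=(A_1\ \cdots\ A_\ell)\in\mathbb{R}^{l\times m}$ with blocks $A_j\in\mathbb{R}^{l\times m_j}$, $m_1+\cdots+m_\ell=m$, such that $\ker A=\ker A_1\times\cdots\times\ker A_\ell$; correspondingly $B=(B_1\ \cdots\ B_\ell)\in\mathbb{R}^{n\times m}$ with $B_j\in\mathbb{R}^{n\times m_j}$ and $c=(c^1,\dots,c^\ell)$ with $c^j\in\mathbb{R}^{m_j}_{>0}$. For each $j$, $P_j=\{y\in\ker A_j\cap\mathbb{R}^{m_j}_{>0}: 1_{m_j}\cdot y=1\}$ and the coefficient polytope is $P=P_1\times\cdots\times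 P_\ell$. Let $J\in\mathbb{R}^{\ell\times m}$ be block diagonal with diagonal blocks $1_{m_j}^{\mathsf T}$. The monomial dependency subspace is $D=\ker\begin{pmatrix}B\\ J\end{pmatrix}\subseteq\mathbb{R}^m$, $d=\dim D$, and $d_j=\dim\ker\begin{pmatrix}B_j\\ 1_{m_j}^{\mathsf T}\end{pmatrix}$. The solution set on the coefficient polytope is $Y_c=\{y\in P: y^z=c^z\text{ for all }z\in D\}$. For $j$ with $\dim P_j=1$: let $y^{j,1},y^{j,2}$ be the endpoints of the segment $\overline{P_j}=\{y\in\ker A_j\cap\mathbb{R}^{m_j}_{\ge0}:1_{m_j}\cdot y=1\}$, $q^j=(y^{j,1}-y^{j,2})\circ(y^{j,1}+y^{j,2})^{-1}$, indices reordered so that $1=q^j_1\ge\cdots\ge q^j_{m_j}=-1$, and $I^j_1,\dots,I^j_{\omega_j}$ the equivalence classes of equal consecutive components of $q^j$ (in decreasing order of the common value). For $j$ with $d_j=1$: $b^j\in\mathbb{R}^{m_j}$ spans $\ker\begin{pmatrix}B_j\\ 1_{m_j}^{\mathsf T}\end{pmatrix}$ and $\tilde b^j\in\mathbb{R}^{\omega_j}$ has entries $\tilde b^j_i=\sum_{i'\in I^j_i}b^j_{i'}$. *)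

From HB Require Import structures.
From mathcomp Require Import all_boot all_order all_algebra.
From mathcomp Require Import reals exp.
Set Implicit Arguments. Unset Strict Implicit. Unset Printing Implicit Defensive.
Import Order.TTheory GRing.Theory Num.Theory.
Local Open Scope ring_scope.

(* Encoding of the classes: the m reaction/monomial indices 'I_m are split
   into L classes by  cls : 'I_m -> 'I_L ; the block A_j (resp. B_j, c^j) is
   the set of columns (entries) i with cls i = j.  Vectors of R^m are row
   vectors 'rV[R]_m; vectors of R^{m_j} are identified with vectors of R^m
   supported on class j. *)

Section Defs.
Variables (R : realType) (l n m L : nat).
Variables (A : 'M[R]_(l, m)) (B : 'M[R]_(n, m)) (cls : 'I_m -> 'I_L).

Definition clmask (j : 'I_L) (y : 'rV[R]_m) : 'rV[R]_m :=
  \row_i (if cls i == j then y 0 i else 0).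

Definition mpow (x y : 'rV[R]_m) : R := \prod_(i < m) (x 0 i) `^ (y 0 i).

(* J : block diagonal with blocks 1_{m_j}^T *)
Definition Jmat : 'M[R]_(L, m) := \matrix_(j, i) (cls i == j)%:R.

(* D = ker (B ; J); a square matrix whose row space is D *)
Definition Dsp : 'M[R]_m := kermx (col_mx B Jmat)^T.
Definition dimD : nat := \rank Dsp.

(* ker (B_j ; 1_{m_j}^T), embedded in R^m as vectors supported on class j *)
Definition onesj (j : 'I_L) : 'rV[R]_m := \row_i (cls i == j)%:R.
Definition offj (j : 'I_L) : 'M[R]_m := diag_mx (\row_i (cls i != j)%:R).
Definition Djsp (j : 'I_L) : 'M[R]_m :=
  kermx (col_mx (col_mx B (onesj j)) (offj j))^T.
Definition dimDj (j : 'I_L) : nat := \rank (Djsp j).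

Definition Pj (j : 'I_L) (y : 'rV[R]_m) : Prop :=
  [/\ forall i, cls i != j -> y 0 i = 0,
      forall i, cls i == j -> 0 < y 0 i,
      A *m y^T = 0
    & \sum_(i | cls i == j) y 0 i = 1].
Definition Pbarj (j : 'I_L) (y : 'rV[R]_m) : Prop :=
  [/\ forall i, cls i != j -> y 0 i = 0,
      forall i, cls i == j -> 0 <= y 0 i,
      A *m y^T = 0
    & \sum_(i | cls i == j) y 0 i = 1].

Definition Ppoly (y : 'rV[R]_m) : Prop := forall j, Pj j (clmask j y).

Definition Yc (c : 'rV[R]_m) (y : 'rV[R]_m) : Prop :=
  Ppoly y /\ forall z : 'rV[R]_m, (z <= Dsp)%MS -> mpow y z = mpow c z.

Definition qj (y1 y2 : 'rV[R]_m) (i : 'I_m) : R :=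
  (y1 0 i - y2 0 i) / (y1 0 i + y2 0 i).

(* the distinct values of q^j on class j, in decreasing order;
   its length is omega_j, and value number k determines I^j_{k+1} *)
Definition qvals (j : 'I_L) (y1 y2 : 'rV[R]_m) : seq R :=
  sort (fun a b => b <= a) (undup [seq qj y1 y2 i | i <- enum 'I_m & cls i == j]).

(* tilde b^j_{k+1} (0-indexed k) *)
Definition btilde (j : 'I_L) (y1 y2 b : 'rV[R]_m) (k : nat) : R :=
  \sum_(i | (cls i == j) && (qj y1 y2 i == nth 0 (qvals j y1 y2) k)) b 0 i.

End Defs.

(* The empty set has no dimension in nat (its dimension is -1). *)
Definition affdim (R : fieldType) (m : nat) (S : 'rV[R]_m -> Prop) (r : nat) : Prop :=
  (exists x, S x) /\
  exists V : 'M[R]_m,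
    [/\ \rank V = r,
        forall x y, S x -> S y -> (x - y <= V)%MS
      & forall W : 'M[R]_m, (forall x y, S x -> S y -> (x - y <= W)%MS) -> (V <= W)%MS].

From HB Require Import structures.
From mathcomp Require Import all_boot all_order all_algebra.
From mathcomp Require Import reals exp.
From mathcomp Require Import boolp classical_sets topology normedtype sequences.
From mathcomp Require Import ring lra.
Set Implicit Arguments. Unset Strict Implicit. Unset Printing Implicit Defensive.
Import Order.TTheory GRing.Theory Num.Theory.
Import numFieldNormedType.Exports.
Local Open Scope ring_scope.

(* By (ii) the dependency space D is the direct sum of the spaces D_j, so the
   equations y^z = c^z (z in D) decouple into one condition per class: none
   when d_j = 0 (then P_j is a point), and <b^j, ln y> = <b^j, ln c> when
   d_j = 1.  In the latter case P_j is the open segment between y^{j,1} and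
   y^{j,2}.  Each endpoint vanishes somewhere on class j (otherwise the segment
   could be prolonged inside the closed polytope), so q^j takes the values 1
   and -1; along y(t) = (1 - t) y^{j,1} + t y^{j,2} one has
   y(t)_i = (y^{j,1}_i + y^{j,2}_i) / 2 * (1 + q^j_i u) with u = 1 - 2t.  The
   condition becomes sum_k tilde b^j_k ln (1 + Q_k u) = const, where
   1 = Q_1 > ... > Q_omega = -1 are the values of q^j.  By Abel summation and
   the sign conditions on tilde b^j the left-hand side is strictly monotone on
   (-1, 1) and unbounded in both directions, so it has exactly one solution. *)

Section LogMixture.
Variable R : realType.
Implicit Types (a b c d q u w S tau : R).

Lemma add1_mul_gt0 q u : -1 <= q <= 1 -> -1 < u < 1 -> 0 < 1 + q * u.
Proof. by move=> /andP[q1 q2] /andP[u1 u2]; have [q0|q0] := leP 0 q; nra. Qed.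

Lemma ln_cross_gt0 a b c d : 0 < a -> 0 < b -> 0 < c -> 0 < d ->
  b * c < a * d -> 0 < (ln a - ln b) - (ln c - ln d).
Proof.
move=> a0 b0 c0 d0 lt_bc_ad.
have -> : (ln a - ln b) - (ln c - ln d) = ln (a * d) - ln (b * c).
  by rewrite !lnM ?posrE //; lra.
by rewrite subr_gt0 ltr_ln ?posrE ?mulr_gt0.
Qed.

Lemma abel_summation (be x : nat -> R) N :
  \sum_(k < N.+1) be k * x k =
  \sum_(k < N) (\sum_(k' < k.+1) be k') * (x k - x k.+1)
  + (\sum_(k' < N.+1) be k') * x N.
Proof.
elim: N => [|N IH]; first by rewrite !big_ord1 big_ord0 add0r.
rewrite big_ord_recr IH /= [\sum_(k < N.+1) _ * (_ - _)]big_ord_recr /=.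
rewrite [\sum_(k' < N.+2) be k']big_ord_recr /=.
set Sn := \sum_(k' < N.+1) be k'.
by rewrite mulrDl mulrBr; lra.
Qed.

(* [- ln (1 - w)] blows up as [w -> 1] while [1 + q w] stays above [(1 + q) / 2]. *)
Lemma ln_gap_unbounded S q tau : 0 < S -> -1 < q <= 1 ->
  exists2 w, 0 <= w < 1 & tau <= S * (ln (1 + q * w) - ln (1 - w)).
Proof.
move=> S0 /andP[q1 q2].
pose m0 := (1 + q) / 2; have m0_gt0 : 0 < m0 by rewrite /m0; lra.
pose K := Num.max 0 (tau / S - ln m0).
have eK_gt0 : 0 < expR (- K) := expR_gt0 _.
have eK_le1 : expR (- K) <= 1 by rewrite expR_le1 oppr_le0 le_max lexx.
pose w := 1 - expR (- K).
have w_ge0 : 0 <= w by rewrite /w; lra.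
have w_lt1 : w < 1 by rewrite /w; lra.
exists w; first by rewrite w_ge0 w_lt1.
have -> : ln (1 - w) = - K by rewrite /w opprB addrC subrK expRK.
have ln_m0_le : ln m0 <= ln (1 + q * w).
  rewrite ler_ln ?posrE //; last by apply: add1_mul_gt0; apply/andP; split; lra.
  have a1 : 0 <= 1 - w by lra.
  have a2 : 0 <= 1 - q by lra.
  have a3 : 0 <= 1 + q by lra.
  by have := mulr_ge0 a1 a2; have := mulr_ge0 w_ge0 a3; rewrite /m0; nra.
have K_ge : tau / S - ln m0 <= K by rewrite le_max lexx orbT.
by rewrite -ler_pdivrMl // mulrC; lra.
Qed.

Lemma continuous_ln_affine a q u : 0 < 1 + q * u ->
  {for u, continuous (fun x => a * ln (1 + q * x))}.
Proof.
move=> pos; apply: continuousM; first exact: cst_continuous.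
have aff : {for u, continuous (fun x : R => 1 + q * x)}.
  apply: continuousD; first exact: cst_continuous.
  by apply: continuousM; [exact: cst_continuous|].
exact: continuous_comp aff (continuous_ln pos).
Qed.

End LogMixture.

Definition log_mix {R : realType} N (Q be : nat -> R) (u : R) : R :=
  \sum_(k < N) be k * ln (1 + Q k * u).

Lemma continuous_log_mix (R : realType) N (Q be : nat -> R) u :
  (forall k, (k < N)%N -> -1 <= Q k <= 1) -> -1 < u < 1 ->
  {for u, continuous (log_mix N Q be)}.
Proof.
move=> Qb u1; apply: (@cvg_big R 'I_N +%R 0 xpredT add_continuous) => k _.
exact: continuous_ln_affine (add1_mul_gt0 (Qb k (ltn_ord k)) u1).
Qed.

Section LogMixMonotone.
Variables (R : realType) (n : nat) (Q be : nat -> R).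
Hypotheses (Q0 : Q 0%N = 1) (Qlast : Q n.+1 = -1)
  (Q_decr : forall k, (k < n.+1)%N -> Q k.+1 < Q k)
  (Q_bound : forall k, (k < n.+2)%N -> -1 <= Q k <= 1)
  (psum_ge0 : forall k, (k < n.+1)%N -> 0 <= \sum_(k' < k.+1) be k')
  (sum_be : \sum_(k < n.+2) be k = 0)
  (be_first_last : be 0%N * be n.+1 < 0).

Let h := log_mix n.+2 Q be.
Let psum k := \sum_(k' < k.+1) be k'.
Let gap u v k := (ln (1 + Q k * v) - ln (1 + Q k * u))
                 - (ln (1 + Q k.+1 * v) - ln (1 + Q k.+1 * u)).

Let psum0_gt0 : 0 < psum 0.
Proof.
have := psum_ge0 (ltn0Sn n); rewrite /psum big_ord1 le_eqVlt => /orP[/eqP e|//].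
by move: be_first_last; rewrite -e mul0r ltxx.
Qed.

Let psum_last_gt0 : 0 < psum n.
Proof.
have be_last_lt0 : be n.+1 < 0.
  by move: be_first_last; rewrite pmulr_rlt0 //; have := psum0_gt0; rewrite /psum big_ord1.
by move: sum_be; rewrite big_ord_recr /= -/(psum n); lra.
Qed.

Let h_sub u v : h v - h u = \sum_(k < n.+1) psum k * gap u v k.
Proof.
rewrite /h /log_mix -sumrB.
under eq_bigr => k _ do rewrite -mulrBr.
rewrite (abel_summation be (fun k => ln (1 + Q k * v) - ln (1 + Q k * u))).
by rewrite sum_be mul0r addr0.
Qed.

(* [(1 + Q_k v) (1 + Q_(k+1) u) - (1 + Q_k u) (1 + Q_(k+1) v) = (Q_k - Q_(k+1)) (v - u)] *)
Let gap_gt0 u v k : -1 < u -> u < v -> v < 1 -> (k < n.+1)%N -> 0 < gap u v k.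
Proof.
move=> u1 uv v1 kn.
have pos w i : -1 < w < 1 -> (i < n.+2)%N -> 0 < 1 + Q i * w.
  by move=> w1 i_lt; apply: add1_mul_gt0 (Q_bound i_lt) w1.
have u_in : -1 < u < 1 by apply/andP; split; lra.
have v_in : -1 < v < 1 by apply/andP; split; lra.
have kn2 : (k < n.+2)%N := ltnW kn.
apply: ln_cross_gt0; try exact: pos.
have dQ : 0 < Q k - Q k.+1 by rewrite subr_gt0 Q_decr.
have duv : 0 < v - u by rewrite subr_gt0.
by have := mulr_gt0 dQ duv; nra.
Qed.

Let gap_ge0 u v k : -1 < u -> u <= v -> v < 1 -> (k < n.+1)%N -> 0 <= gap u v k.
Proof.
move=> u1; rewrite le_eqVlt => /orP[/eqP <- _ _|uv v1 kn]; last exact/ltW/gap_gt0.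
by rewrite /gap !subrr.
Qed.

Lemma log_mix_lt u v : -1 < u -> u < v -> v < 1 -> h u < h v.
Proof.
move=> u1 uv v1; rewrite -subr_gt0 h_sub big_ord_recl /=.
have head_gt0 : 0 < psum 0 * gap u v 0 by rewrite mulr_gt0 ?gap_gt0.
apply: (lt_le_trans head_gt0); rewrite lerDl; apply: sumr_ge0 => i _.
have i_lt : (bump 0 i < n.+1)%N := ltn_ord (lift ord0 i).
by apply: mulr_ge0; [exact: psum_ge0 | apply: gap_ge0 => //; exact: ltW].
Qed.

Let h0 : h 0 = 0.
Proof. by apply: big1 => k _; rewrite mulr0 addr0 ln1 mulr0. Qed.

Lemma log_mix_unbounded_above tau : exists2 v, 0 <= v < 1 & tau <= h v.
Proof.
have Qn : -1 < Q n <= 1.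
  by rewrite -Qlast Q_decr //; case/andP: (Q_bound (leqW (ltnSn n))).
have [v /andP[v0 v1] le_tau] := ln_gap_unbounded tau psum_last_gt0 Qn.
exists v; first by rewrite v0 v1.
rewrite -[h v]subr0 -h0 h_sub big_ord_recr /=; apply: (le_trans le_tau).
have -> : gap 0 v n = ln (1 + Q n * v) - ln (1 - v).
  by rewrite /gap !mulr0 !addr0 ln1 Qlast mulN1r !subr0.
rewrite lerDr; apply: sumr_ge0 => i _.
have i_lt : (i < n.+1)%N := leqW (ltn_ord i).
by apply: mulr_ge0; [exact: psum_ge0 | apply: gap_ge0 => //; lra].
Qed.

Lemma log_mix_unbounded_below tau : exists2 u, -1 < u <= 0 & h u <= tau.
Proof.
have Q1 : -1 < - Q 1%N <= 1.
  have := Q_decr (ltn0Sn n); have := Q_bound (isT : (1 < n.+2)%N).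
  by rewrite Q0 => /andP[lo _] hi; apply/andP; split; lra.
have [w /andP[w0 w1] le_tau] := ln_gap_unbounded (- tau) psum0_gt0 Q1.
exists (- w); first by apply/andP; split; lra.
have -> : h (- w) = - (h 0 - h (- w)) by rewrite h0 sub0r opprK.
rewrite h_sub big_ord_recl /= lerNl; apply: (le_trans le_tau).
have -> : gap (- w) 0 0 = ln (1 + - Q 1%N * w) - ln (1 - w).
  by rewrite /gap !mulr0 !addr0 ln1 Q0 mul1r mulrN mulNr; lra.
rewrite lerDl; apply: sumr_ge0 => i _.
have i_lt : (bump 0 i < n.+1)%N := ltn_ord (lift ord0 i).
by apply: mulr_ge0; [exact: psum_ge0 | apply: gap_ge0 => //; lra].
Qed.

Lemma log_mix_surj tau : exists2 u, -1 < u < 1 & h u = tau.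
Proof.
have [a /andP[a1 a0] ha] := log_mix_unbounded_below tau.
have [b /andP[b0 b1] hb] := log_mix_unbounded_above tau.
have hcont : {within `[a, b], continuous h}%classic.
  apply: continuous_in_subspaceT => x; rewrite inE /= in_itv /= => /andP[xa xb].
  by apply: continuous_log_mix => //; apply/andP; split; lra.
have tau_in : Num.min (h a) (h b) <= tau <= Num.max (h a) (h b).
  by rewrite ge_min le_max ha hb !orbT.
have ab : a <= b by lra.
have [c] := IVT ab hcont tau_in.
by rewrite in_itv /= => /andP[ca cb] <-; exists c => //; apply/andP; split; lra.
Qed.

End LogMixMonotone.

Lemma log_mixN (R : realType) N (Q be : nat -> R) u :
  log_mix N Q (fun k => - be k) u = - log_mix N Q be u.
Proof. by rewrite /log_mix -sumrN; apply: eq_bigr => k _; rewrite mulNr. Qed.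

Lemma log_mix_bij (R : realType) n (Q be : nat -> R) :
  Q 0%N = 1 -> Q n.+1 = -1 ->
  (forall k, (k < n.+1)%N -> Q k.+1 < Q k) ->
  (forall k, (k < n.+2)%N -> -1 <= Q k <= 1) ->
  ((forall k, (k < n.+1)%N -> 0 <= \sum_(k' < k.+1) be k') \/
   (forall k, (k < n.+1)%N -> \sum_(k' < k.+1) be k' <= 0)) ->
  \sum_(k < n.+2) be k = 0 -> be 0%N * be n.+1 < 0 ->
  forall tau, exists! u, -1 < u < 1 /\ log_mix n.+2 Q be u = tau.
Proof.
move=> Q0 Qn Qdec Qb.
suff main (be' : nat -> R) : (forall k, (k < n.+1)%N -> 0 <= \sum_(k' < k.+1) be' k') ->
    \sum_(k < n.+2) be' k = 0 -> be' 0%N * be' n.+1 < 0 ->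
    forall tau, exists! u, -1 < u < 1 /\ log_mix n.+2 Q be' u = tau.
  case=> [psum_ge0|psum_le0] sum0 prod tau; first exact: main.
  have psumN_ge0 k : (k < n.+1)%N -> 0 <= \sum_(k' < k.+1) - be k'.
    by move=> kn; rewrite sumrN oppr_ge0; exact: psum_le0.
  have sumN0 : \sum_(k < n.+2) - be k = 0 by rewrite sumrN sum0 oppr0.
  have prodN : - be 0%N * - be n.+1 < 0 by rewrite mulrNN.
  have [u [[u1 hu] u_uniq]] := main (fun k => - be k) psumN_ge0 sumN0 prodN (- tau).
  exists u; split; first by split => //; apply: oppr_inj; rewrite -log_mixN.
  by move=> v [v1 hv]; apply: u_uniq; split => //; rewrite log_mixN hv.
move=> psum_ge0 sum0 prod tau.
have [u u1 hu] := log_mix_surj Q0 Qn Qdec Qb psum_ge0 sum0 prod tau.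
have mono x y : -1 < x < 1 -> -1 < y < 1 -> x < y ->
    log_mix n.+2 Q be' x < log_mix n.+2 Q be' y.
  by move=> /andP[x1 _] /andP[_ y1] xy; exact: log_mix_lt x1 xy y1.
exists u; split => // v [v1 hv]; have [uv|vu|//] := ltgtP u v.
- by have := mono _ _ u1 v1 uv; rewrite hu hv ltxx.
- by have := mono _ _ v1 u1 vu; rewrite hu hv ltxx.
Qed.

Section MonomialDependencies.
Variables (R : realType) (n m L : nat) (B : 'M[R]_(n, m)) (cls : 'I_m -> 'I_L).
Implicit Types (j : 'I_L) (k : nat).

Lemma offj_mul0P k (K : 'M[R]_(k, m)) j :
  K *m offj R cls j = 0 <-> forall r i, cls i != j -> K r i = 0.
Proof.
rewrite /offj mul_mx_diag; split => [/matrixP K0 r i ij | K0].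
  by have := K0 r i; rewrite !mxE ij mulr1.
apply/matrixP => r i; rewrite !mxE.
by case: (boolP (cls i != j)) => ij; [rewrite K0 // mul0r | rewrite mulr0].
Qed.

Lemma onesj_mul0P k (K : 'M[R]_(k, m)) j :
  K *m (onesj R cls j)^T = 0 <-> forall r, \sum_(i | cls i == j) K r i = 0.
Proof.
have KJ r : (K *m (onesj R cls j)^T) r 0 = \sum_(i | cls i == j) K r i.
  rewrite !mxE [RHS]big_mkcond /=; apply: eq_bigr => i _; rewrite !mxE.
  by case: (cls i == j); rewrite ?mulr1 ?mulr0.
split => [K0 r | K0]; first by rewrite -KJ K0 mxE.
by apply/matrixP => r c; rewrite ord1 KJ K0 mxE.
Qed.

Lemma sub_DjspP k (K : 'M[R]_(k, m)) j :
  (K <= Djsp B cls j)%MS <->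
  [/\ K *m B^T = 0, K *m (onesj R cls j)^T = 0 & K *m offj R cls j = 0].
Proof.
have offjT : (offj R cls j)^T = offj R cls j by rewrite tr_diag_mx.
rewrite /Djsp; split.
  move/sub_kermxP/eqP; rewrite !tr_col_mx !mul_mx_row !row_mx_eq0 offjT.
  by case/andP => /andP[/eqP -> /eqP ->] /eqP ->.
case=> KB Kones Koff; apply/sub_kermxP.
by rewrite !tr_col_mx !mul_mx_row offjT KB Kones Koff !row_mx0.
Qed.

Lemma sub_DspP k (K : 'M[R]_(k, m)) :
  (K <= Dsp B cls)%MS <-> K *m B^T = 0 /\ K *m (Jmat R cls)^T = 0.
Proof.
rewrite /Dsp; split.
  move/sub_kermxP/eqP; rewrite !tr_col_mx !mul_mx_row !row_mx_eq0.
  by case/andP => /eqP -> /eqP ->.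
by case=> KB KJ; apply/sub_kermxP; rewrite !tr_col_mx !mul_mx_row KB KJ row_mx0.
Qed.

Lemma Jmat_mul0 k (K : 'M[R]_(k, m)) j :
  K *m (onesj R cls j)^T = 0 -> K *m offj R cls j = 0 -> K *m (Jmat R cls)^T = 0.
Proof.
move=> /onesj_mul0P Kones /offj_mul0P Koff; apply/matrixP => r j'; rewrite !mxE.
under eq_bigr => i _ do rewrite !mxE.
have [->|j'j] := eqVneq j' j.
  rewrite -[RHS](Kones r) [RHS]big_mkcond; apply: eq_bigr => i _.
  by case: (cls i == j); rewrite ?mulr1 ?mulr0.
apply: big1 => i _.
have [ij'|] := eqVneq (cls i) j'; last by rewrite mulr0.
by rewrite Koff ?mul0r // ij'.
Qed.

Lemma Djsp_sub_Dsp j : (Djsp B cls j <= Dsp B cls)%MS.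
Proof.
have [KB Kones Koff] := (sub_DjspP (Djsp B cls j) j).1 (submx_refl _).
by apply/sub_DspP; split => //; apply: Jmat_mul0 Kones Koff.
Qed.

Lemma offj_add_diag_onesj j : offj R cls j + diag_mx (onesj R cls j) = 1%:M.
Proof.
apply/matrixP => i i'; rewrite !mxE -mulrnDl.
by case: (cls i == j); rewrite /= ?add0r ?addr0 mulr1n.
Qed.

(* Rows of [D_j] vanish off class [j]; rows of the other [D_j'] vanish on it. *)
Lemma mxdirect_sum_Djsp : mxdirect (\sum_j Djsp B cls j).
Proof.
apply/mxdirect_sumsP => j _; set W := (Djsp B cls j :&: _)%MS.
have [_ _ Woff] := (sub_DjspP W j).1 (capmxSl _ _).
suff Won : W *m diag_mx (onesj R cls j) = 0.
  by rewrite -[W]mulmx1 -(offj_add_diag_onesj j) mulmxDr Woff Won addr0.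
apply/sub_kermxP; apply: submx_trans (capmxSr _ _) _.
apply/sumsmx_subP => j' j'j; apply/sub_kermxP.
have [_ _ /offj_mul0P] := (sub_DjspP (Djsp B cls j') j').1 (submx_refl _).
move: (Djsp B cls j') => K Koff; rewrite mul_mx_diag; apply/matrixP => r i; rewrite !mxE.
have [ij|] := eqVneq (cls i) j; last by rewrite mulr0.
by rewrite Koff ?mul0r // ij eq_sym.
Qed.

Lemma Dsp_sub_sum_Djsp : dimD B cls = (\sum_j dimDj B cls j)%N ->
  (Dsp B cls <= \sum_j Djsp B cls j)%MS.
Proof.
move=> dimD_sum.
have sum_sub : (\sum_j Djsp B cls j <= Dsp B cls)%MS.
  by apply/sumsmx_subP => j _; apply: Djsp_sub_Dsp.
rewrite -(mxrank_leqif_sup sum_sub).2 (mxdirectP mxdirect_sum_Djsp) /=.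
by move: dimD_sum; rewrite /dimD /dimDj => ->.
Qed.

End MonomialDependencies.

Lemma big_uniq_pick (T : eqType) (V : nmodType) (s : seq T) x (F : T -> V) :
  uniq s -> x \in s -> \sum_(y <- s) (if x == y then F y else 0) = F x.
Proof.
move=> s_uniq xs; rewrite -big_mkcond (big_rem x) //= eqxx big1_seq ?addr0 //.
by move=> y /andP[/eqP <-]; rewrite mem_rem_uniqF.
Qed.

Section QValues.
Variables (R : realType) (m L : nat) (cls : 'I_m -> 'I_L) (j : 'I_L).
Variables (y1 y2 b : 'rV[R]_m).
Local Notation qv := (qvals cls j y1 y2).

Lemma qvals_uniq : uniq qv.
Proof. by rewrite sort_uniq undup_uniq. Qed.

Lemma qvals_sorted : sorted (fun a b => b <= a) qv.
Proof. by apply: sort_sorted => x y; exact: le_total. Qed.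

Lemma mem_qvals i : cls i == j -> qj y1 y2 i \in qv.
Proof. by move=> ij; rewrite mem_sort mem_undup map_f // mem_filter ij mem_enum. Qed.

Lemma qvals_memP v : v \in qv -> exists2 i, cls i == j & v = qj y1 y2 i.
Proof.
rewrite mem_sort mem_undup => /mapP[i].
by rewrite mem_filter => /andP[ij _] ->; exists i.
Qed.

Lemma sum_btilde (G : R -> R) :
  \sum_(i | cls i == j) b 0 i * G (qj y1 y2 i) =
  \sum_(k < size qv) btilde cls j y1 y2 b k * G (nth 0 qv k).
Proof.
rewrite -(big_mkord xpredT (fun k => btilde cls j y1 y2 b k * G (nth 0 qv k))).
rewrite -(big_nth 0 xpredT (fun v =>
  (\sum_(i | (cls i == j) && (qj y1 y2 i == v)) b 0 i) * G v)).
transitivity (\sum_(v <- qv) \sum_(i | cls i == j)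
    (if qj y1 y2 i == v then b 0 i * G (qj y1 y2 i) else 0)).
  rewrite exchange_big /=; apply: eq_bigr => i ij.
  by rewrite big_uniq_pick ?qvals_uniq ?mem_qvals.
apply: eq_bigr => v _; rewrite mulr_suml big_mkcondr /=.
by apply: eq_bigr => i _; case: eqP => // ->.
Qed.

End QValues.

Section DecreasingValues.
Variables (R : realDomainType) (s : seq R).
Hypotheses (s_sorted : sorted (fun a b => b <= a) s) (s_uniq : uniq s)
  (s_bound : forall x, x \in s -> -1 <= x <= 1) (s1 : 1 \in s) (sN1 : -1 \in s).

Let ge_trans : transitive (fun a b : R => b <= a).
Proof. by move=> y x z xy yz; apply: le_trans yz xy. Qed.

Let nth_le i k : (i <= k < size s)%N -> nth 0 s k <= nth 0 s i.
Proof.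
move=> /andP[ik ks]; have is_ : (i < size s)%N := leq_ltn_trans ik ks.
by apply: (sorted_leq_nth ge_trans (fun x => lexx x) 0 s_sorted); rewrite ?inE.
Qed.

Lemma nth_decr_lt k : (k.+1 < size s)%N -> nth 0 s k.+1 < nth 0 s k.
Proof.
move=> ks; have ks' : (k < size s)%N := ltnW ks.
rewrite lt_neqAle nth_le ?leqnSn // andbT.
by rewrite (nth_uniq 0 ks ks' s_uniq) gtn_eqF.
Qed.

Lemma nth_decr_first : nth 0 s 0 = 1.
Proof.
have s0 : (0 < size s)%N by case: s s1.
apply/le_anti; rewrite (andP (s_bound (mem_nth 0 s0))).2 /=.
by rewrite -{1}(nth_index 0 s1) nth_le // index_mem.
Qed.

Lemma nth_decr_last : nth 0 s (size s).-1 = -1.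
Proof.
have s0 : (0 < size s)%N by case: s sN1.
have last_lt : ((size s).-1 < size s)%N by rewrite prednK.
apply/le_anti; rewrite (andP (s_bound (mem_nth 0 last_lt))).1 andbT.
have := @nth_le (index (-1) s) (size s).-1; rewrite nth_index //; apply.
by rewrite last_lt andbT -ltnS prednK // index_mem.
Qed.

Lemma size_decr_gt1 : (1 < size s)%N.
Proof.
have s0 : (0 < size s)%N by case: s s1.
rewrite ltnNge; apply/negP => s_le1.
have last0 : (size s).-1 = 0%N by case: (size s) s0 s_le1 => [|[|]].
by have := nth_decr_last; rewrite last0 nth_decr_first; lra.
Qed.

End DecreasingValues.

Definition is_segment (R : realType) m (P : 'rV[R]_m -> Prop) (y1 y2 : 'rV[R]_m) :=
  forall y, P y <-> exists t : R, 0 <= t <= 1 /\ y = (1 - t) *: y1 + t *: y2.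

Lemma is_segment_sym (R : realType) m (P : 'rV[R]_m -> Prop) y1 y2 :
  is_segment P y1 y2 -> is_segment P y2 y1.
Proof.
move=> seg y; rewrite seg; split=> -[t [/andP[t0 t1] ->]]; exists (1 - t).
  by split; [apply/andP; split; lra | rewrite addrC; congr (_ *: _ + _ *: _); ring].
by split; [apply/andP; split; lra | rewrite addrC; congr (_ *: _ + _ *: _); ring].
Qed.

Lemma is_segment_ends (R : realType) m (P : 'rV[R]_m -> Prop) y1 y2 :
  is_segment P y1 y2 -> P y1 /\ P y2.
Proof.
move=> seg; split; apply/seg.
  by exists 0; rewrite lexx ler01 subr0 scale1r scale0r addr0.
by exists 1; rewrite lexx ler01 subrr scale1r scale0r add0r.
Qed.

Section ClassPolytope.
Variables (R : realType) (l m L : nat) (A : 'M[R]_(l, m)) (cls : 'I_m -> 'I_L).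
Variable j : 'I_L.
Local Notation Pj := (Pj A cls j).
Local Notation Pbarj := (Pbarj A cls j).

Lemma Pj_Pbarj y : Pj y -> Pbarj y.
Proof. by case=> off pos Ay sum1; split => // i ij; apply/ltW/pos. Qed.

(* [e = 1 / (1 + sum_i y1_i / y2_i)] keeps [e * y1 <= y2] on class [j]. *)
Lemma Pbarj_prolong y1 y2 : Pbarj y1 -> Pbarj y2 ->
  (forall i, cls i == j -> 0 < y2 0 i) ->
  exists2 e, 0 < e & Pbarj ((1 + e) *: y2 - e *: y1).
Proof.
move=> [off1 ge1 Ay1 sum1] [off2 _ Ay2 sum2] pos2.
pose T := \sum_(i | cls i == j) y1 0 i / y2 0 i.
have ratio_le i : cls i == j -> y1 0 i / y2 0 i <= T.
  move=> ij; rewrite /T (bigD1 i) //= lerDl; apply: sumr_ge0 => k /andP[kj _].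
  by rewrite divr_ge0 ?ge1 ?ltW ?pos2.
have T_ge0 : 0 <= T by apply: sumr_ge0 => i ij; rewrite divr_ge0 ?ge1 ?ltW ?pos2.
pose e := (1 + T)^-1; have e_gt0 : 0 < e by rewrite invr_gt0; lra.
have ey1_le i : cls i == j -> e * y1 0 i <= y2 0 i.
  move=> ij; have := ratio_le i ij; rewrite ler_pdivrMr ?pos2 // => le1.
  rewrite mulrC ler_pdivrMr; last lra.
  by have := ge1 i ij; have := pos2 i ij; nra.
exists e => //; split.
- by move=> i ij; rewrite !mxE off1 ?off2 // !mulr0 subrr.
- by move=> i ij; rewrite !mxE; have := ey1_le i ij; have := pos2 i ij; nra.
- by rewrite linearB /= !linearZ /= mulmxDr -!scalemxAr mulmxN Ay1 Ay2 oppr0 !scaler0 addr0.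
- rewrite (eq_bigr (fun i => (1 + e) * y2 0 i - e * y1 0 i)); last by move=> i _; rewrite !mxE.
  by rewrite sumrB -!mulr_sumr sum1 sum2; ring.
Qed.

Lemma segment_end_has_zero y1 y2 : y1 != y2 -> is_segment Pbarj y1 y2 ->
  exists2 i, cls i == j & y2 0 i = 0.
Proof.
move=> y12 seg; have [P1 P2] := is_segment_ends seg.
case: (boolP [exists i, (cls i == j) && (y2 0 i == 0)]).
  by case/existsP => i /andP[ij /eqP]; exists i.
move/existsPn => no_zero; exfalso.
have pos2 i : cls i == j -> 0 < y2 0 i.
  move=> ij; have [_ ge2 _ _] := P2.
  by rewrite lt_neqAle eq_sym ge2 // andbT; have := no_zero i; rewrite ij.
have [e e_gt0 Pz] := Pbarj_prolong P1 P2 pos2.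
have [t [/andP[_ t1] ez]] := (seg _).1 Pz.
apply/(negP y12)/eqP/matrixP => r i; rewrite ord1 {r}.
have /eqP := congr1 (fun y : 'rV[R]_m => y 0 i) ez; rewrite !mxE.
rewrite -subr_eq0 (_ : _ - _ = (1 + e - t) * (y2 0 i - y1 0 i)); last by ring.
by rewrite mulf_eq0 subr_eq0 => /orP[/eqP|/eqP //]; lra.
Qed.

End ClassPolytope.

Definition lnmpow (R : realType) m (y z : 'rV[R]_m) : R := \sum_i z 0 i * ln (y 0 i).

Section ClassSolutions.
Variables (R : realType) (l m L : nat) (A : 'M[R]_(l, m)) (cls : 'I_m -> 'I_L).
Variables (j : 'I_L) (y1 y2 : 'rV[R]_m).
Hypotheses (y12 : y1 != y2) (seg : is_segment (Pbarj A cls j) y1 y2)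
  (Pj_ne : exists y, Pj A cls j y).

Local Notation q := (qj y1 y2).
Local Notation qv := (qvals cls j y1 y2).
Let pt t : 'rV[R]_m := (1 - t) *: y1 + t *: y2.

Let ends_ge0 i : cls i == j -> 0 <= y1 0 i /\ 0 <= y2 0 i.
Proof.
move=> ij; have [[_ ge1 _ _] [_ ge2 _ _]] := is_segment_ends seg.
by split; [exact: ge1 | exact: ge2].
Qed.

Let ends_sum_gt0 i : cls i == j -> 0 < y1 0 i + y2 0 i.
Proof.
move=> ij; have [y Py] := Pj_ne; have [_ pos _ _] := Py.
have [t [/andP[t0 t1] ey]] := (seg y).1 (Pj_Pbarj Py).
have := pos i ij; rewrite ey !mxE; have [g1 g2] := ends_ge0 ij.
have t1' : 0 <= 1 - t by lra.
by have := mulr_ge0 t0 g1; have := mulr_ge0 t1' g2; nra.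
Qed.

Let qj_bound i : cls i == j -> -1 <= q i <= 1.
Proof.
move=> ij; have s_gt0 := ends_sum_gt0 ij; have [g1 g2] := ends_ge0 ij.
by rewrite /qj ler_pdivlMr // ler_pdivrMr //; apply/andP; split; lra.
Qed.

(* Each endpoint vanishes somewhere on class [j], and there [q] is [1] or [-1]. *)
Let one_in_qvals : 1 \in qv.
Proof.
have [i ij y2i] := segment_end_has_zero y12 seg.
have := ends_sum_gt0 ij; rewrite y2i addr0 => y1i.
by have := mem_qvals y1 y2 ij; rewrite /qj y2i subr0 addr0 divff // gt_eqF.
Qed.

Let mone_in_qvals : -1 \in qv.
Proof.
have y21 : y2 != y1 by rewrite eq_sym.
have [i ij y1i] := segment_end_has_zero y21 (is_segment_sym seg).
have := ends_sum_gt0 ij; rewrite y1i add0r => y2i.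
by have := mem_qvals y1 y2 ij; rewrite /qj y1i sub0r add0r mulNr divff // gt_eqF.
Qed.

Lemma Pj_segmentP y : Pj A cls j y <-> exists2 t, 0 < t < 1 & y = pt t.
Proof.
split=> [Py | [t /andP[t0 t1] ->]].
  have [t [/andP[t0 t1] ey]] := (seg y).1 (Pj_Pbarj Py); have [_ pos _ _] := Py.
  exists t => //; rewrite lt_neqAle t0 lt_neqAle t1 !andbT; apply/andP; split.
    apply/eqP => t_0; have y21 : y2 != y1 by rewrite eq_sym.
    have [i ij y1i] := segment_end_has_zero y21 (is_segment_sym seg).
    by have := pos i ij; rewrite ey -t_0 !mxE y1i; lra.
  apply/eqP => t_1; have [i ij y2i] := segment_end_has_zero y12 seg.
  by have := pos i ij; rewrite ey t_1 !mxE y2i; lra.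
have [off _ Ay sum1] : Pbarj A cls j (pt t).
  by apply/seg; exists t; split=> //; apply/andP; split; exact: ltW.
split => // i ij; rewrite !mxE; have s_gt0 := ends_sum_gt0 ij.
have [g1 g2] := ends_ge0 ij; have t1' : 0 < 1 - t by lra.
have := mulr_ge0 (ltW t1') g1; have := mulr_ge0 (ltW t0) g2.
have [y1i|y1i] := ltP 0 (y1 0 i); first by have := mulr_gt0 t1' y1i; lra.
have y2i : 0 < y2 0 i by lra.
by have := mulr_gt0 t0 y2i; lra.
Qed.

Let lnmpow_class (b y : 'rV[R]_m) : (forall i, cls i != j -> b 0 i = 0) ->
  lnmpow y b = \sum_(i | cls i == j) b 0 i * ln (y 0 i).
Proof.
move=> b_off; rewrite /lnmpow (bigID (fun i => cls i == j)) /= [X in _ + X]big1 ?addr0 //.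
by move=> i ij; rewrite b_off ?mul0r.
Qed.

(* On class [j], [pt t = (y1 + y2) / 2 * (1 + q * (1 - 2 t))]. *)
Lemma lnmpow_segment (b : 'rV[R]_m) t : (forall i, cls i != j -> b 0 i = 0) -> 0 < t < 1 ->
  lnmpow (pt t) b = \sum_(i | cls i == j) b 0 i * ln ((y1 0 i + y2 0 i) / 2)
    + log_mix (size qv) (nth 0 qv) (btilde cls j y1 y2 b) (1 - 2 * t).
Proof.
move=> b_off /andP[t0 t1]; have u1 : -1 < 1 - 2 * t < 1 by apply/andP; split; lra.
rewrite lnmpow_class // /log_mix -(sum_btilde cls j y1 y2 b (fun v => ln (1 + v * (1 - 2 * t)))).
rewrite -big_split /=; apply: eq_bigr => i ij; rewrite -mulrDr; congr (_ * _).
have s_gt0 := ends_sum_gt0 ij.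
have -> : pt t 0 i = (y1 0 i + y2 0 i) / 2 * (1 + q i * (1 - 2 * t)).
  by rewrite !mxE /qj; field; lra.
by rewrite lnM ?posrE ?divr_gt0 ?add1_mul_gt0 ?qj_bound.
Qed.

Lemma class_lnmpow_bij (b : 'rV[R]_m) :
  (forall i, cls i != j -> b 0 i = 0) -> \sum_(i | cls i == j) b 0 i = 0 ->
  (let om := size qv in let bt := btilde cls j y1 y2 b in
   ((forall k, (k < om.-1)%N -> 0 <= \sum_(k' < k.+1) bt k') \/
    (forall k, (k < om.-1)%N -> \sum_(k' < k.+1) bt k' <= 0)) /\
   bt 0%N * bt om.-1 < 0) ->
  forall tau, exists! y, Pj A cls j y /\ lnmpow y b = tau.
Proof.
move=> b_off b_sum [psum_sign bt_first_last] tau.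
have qv_in x : x \in qv -> -1 <= x <= 1 by case/qvals_memP => i ij ->; exact: qj_bound.
have qv_sorted := qvals_sorted cls j y1 y2; have qv_uniq := qvals_uniq cls j y1 y2.
have [n qv_n] : exists n, size qv = n.+2.
  exists (size qv).-2; have := size_decr_gt1 qv_sorted qv_in one_in_qvals mone_in_qvals.
  by case: (size qv) => [|[|k]].
have Q0 := nth_decr_first qv_sorted qv_in one_in_qvals.
have := nth_decr_last qv_sorted qv_in mone_in_qvals; rewrite qv_n => Qlast.
have Qdec k : (k < n.+1)%N -> nth 0 qv k.+1 < nth 0 qv k.
  by move=> kn; apply: (nth_decr_lt qv_sorted qv_uniq); rewrite qv_n.
have Qb k : (k < n.+2)%N -> -1 <= nth 0 qv k <= 1.
  by move=> kn; apply/qv_in/mem_nth; rewrite qv_n.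
have bt_sum : \sum_(k < n.+2) btilde cls j y1 y2 b k = 0.
  have := sum_btilde cls j y1 y2 b (fun _ => 1); rewrite qv_n.
  under eq_bigr do rewrite mulr1; under [X in _ = X]eq_bigr do rewrite mulr1.
  by rewrite b_sum => <-.
rewrite qv_n /= in psum_sign bt_first_last.
set C := \sum_(i | cls i == j) b 0 i * ln ((y1 0 i + y2 0 i) / 2).
have [u [[/andP[u_gt u_lt] hu] u_uniq]] :=
  log_mix_bij Q0 Qlast Qdec Qb psum_sign bt_sum bt_first_last (tau - C).
have t01 : 0 < (1 - u) / 2 < 1 by apply/andP; split; lra.
exists (pt ((1 - u) / 2)); split.
  split; first by apply/Pj_segmentP; exists ((1 - u) / 2).
  by rewrite lnmpow_segment // -/C qv_n (_ : 1 - 2 * _ = u) ?hu; [ring | field].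
move=> y [/Pj_segmentP [t t01' ->]]; rewrite lnmpow_segment // -/C qv_n => ht.
have u_t : u = 1 - 2 * t.
  case/andP: t01' => t0 t1; apply: u_uniq; split; first by apply/andP; split; lra.
  by rewrite -ht; lra.
by congr pt; rewrite u_t; field.
Qed.

End ClassSolutions.

Lemma mpowE (R : realType) m (y z : 'rV[R]_m) :
  (forall i, 0 < y 0 i) -> mpow y z = expR (lnmpow y z).
Proof.
by move=> y_gt0; rewrite /mpow expR_sum; apply: eq_bigr => i _; rewrite /powR gt_eqF.
Qed.

Lemma affdim0_singleton (R : realType) m (S : 'rV[R]_m -> Prop) :
  affdim S 0 -> exists! x, S x.
Proof.
case=> [[x Sx] [V [rkV diffV _]]]; exists x; split => // y Sy.
have V0 : V = 0 by apply/eqP; rewrite -mxrank_eq0 rkV.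
by apply/eqP; rewrite -subr_eq0 -submx0 -V0 diffV.
Qed.

Section Classwise.
Variables (R : realType) (m L : nat) (cls : 'I_m -> 'I_L).
Implicit Types (y z : 'rV[R]_m) (j : 'I_L).

Lemma clmask_id j y : (forall i, cls i != j -> y 0 i = 0) -> clmask cls j y = y.
Proof.
move=> y_off; apply/matrixP => r i; rewrite ord1 mxE.
by case: eqVneq => // ij; rewrite y_off ?ij.
Qed.

Lemma lnmpow_clmask j y z : (forall i, cls i != j -> z 0 i = 0) ->
  lnmpow (clmask cls j y) z = lnmpow y z.
Proof.
move=> z_off; apply: eq_bigr => i _; rewrite mxE.
by case: eqVneq => // ij; rewrite z_off ?ij // !mul0r.
Qed.

Lemma exists_unique_classwise (G : 'I_L -> 'rV[R]_m -> Prop) :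
  (forall j y, G j y -> clmask cls j y = y) -> (forall j, exists! y, G j y) ->
  exists! y, forall j, G j (clmask cls j y).
Proof.
move=> G_mask G_uniq; have [f Gf] := choice G_uniq.
pose y := \row_i f (cls i) 0 i.
have y_mask j : clmask cls j y = f j.
  rewrite -[RHS](G_mask _ _ (Gf j).1); apply/matrixP => r i; rewrite !mxE.
  by case: eqVneq => // ->.
exists y; split=> [j | w Gw]; first by rewrite y_mask; exact: (Gf j).1.
apply/matrixP => r i; rewrite ord1 mxE.
have -> := (Gf (cls i)).2 _ (Gw (cls i)).
by rewrite mxE eqxx.
Qed.

End Classwise.

Section SolutionSet.
Variables (R : realType) (l n m L : nat) (A : 'M[R]_(l, m)) (B : 'M[R]_(n, m)).
Variables (cls : 'I_m -> 'I_L) (b : 'I_L -> 'rV[R]_m).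
Hypotheses (dimD_sum : dimD B cls = (\sum_j dimDj B cls j)%N)
  (dimDj_le1 : forall j, (dimDj B cls j <= 1)%N)
  (b_span : forall j, dimDj B cls j = 1%N -> (b j == Djsp B cls j)%MS).

Lemma Ppoly_gt0 (y : 'rV[R]_m) : Ppoly A cls y -> forall i, 0 < y 0 i.
Proof.
move=> Py i; have [_ pos _ _] := Py (cls i).
by have := pos i (eqxx _); rewrite mxE eqxx.
Qed.

Lemma b_class j : dimDj B cls j = 1%N ->
  (forall i, cls i != j -> b j 0 i = 0) /\ \sum_(i | cls i == j) b j 0 i = 0.
Proof.
move=> dj; have /andP[b_sub _] := b_span dj.
have [_ /onesj_mul0P b_sum /offj_mul0P b_off] := (sub_DjspP B cls (b j) j).1 b_sub.
by split; [move=> i; apply: b_off | apply: b_sum].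
Qed.

(* [D] is the direct sum of the lines spanned by the [b j] with [d_j = 1]. *)
Lemma Dsp_sub_kermx (v : 'cV[R]_m) :
  (forall j, dimDj B cls j = 1%N -> b j *m v = 0) -> (Dsp B cls <= kermx v)%MS.
Proof.
move=> bv0; apply: submx_trans (Dsp_sub_sum_Djsp dimD_sum) _.
apply/sumsmx_subP => j _; have := dimDj_le1 j.
case dj: (dimDj B cls j) => [|[|//]] _.
  by move/eqP: dj; rewrite mxrank_eq0 => /eqP ->; exact: sub0mx.
have /andP[_ Dj_b] := b_span dj.
by apply: submx_trans Dj_b _; apply/sub_kermxP; exact: bv0.
Qed.

Lemma Yc_classwise (c y : 'rV[R]_m) : (forall i, 0 < c 0 i) ->
  Yc A B cls c y <-> forall j, Pj A cls j (clmask cls j y) /\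
    (dimDj B cls j = 1%N -> lnmpow (clmask cls j y) (b j) = lnmpow c (b j)).
Proof.
move=> c_gt0; split=> [[Py mpow_eq] j | Gy].
  split=> [|dj]; first exact: Py.
  rewrite lnmpow_clmask; last exact: (b_class dj).1.
  have /andP[b_sub _] := b_span dj.
  have := mpow_eq _ (submx_trans b_sub (Djsp_sub_Dsp B cls j)).
  by rewrite !mpowE //; [move/expR_inj | exact: Ppoly_gt0].
have Py : Ppoly A cls y by move=> j; exact: (Gy j).1.
split=> // z zD; rewrite !mpowE //; last exact: Ppoly_gt0.
pose v := \col_i (ln (y 0 i) - ln (c 0 i)).
have lnmpow_sub z' : lnmpow y z' - lnmpow c z' = (z' *m v) 0 0.
  by rewrite /lnmpow -sumrB mxE; apply: eq_bigr => i _; rewrite mxE mulrBr.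
suff /sub_kermxP/matrixP/(_ 0 0) : (z <= kermx v)%MS.
  by rewrite -lnmpow_sub mxE => /eqP; rewrite subr_eq0 => /eqP ->.
apply: submx_trans zD (Dsp_sub_kermx _) => j dj.
apply/matrixP => r r'; rewrite !ord1 -lnmpow_sub mxE.
by rewrite -(Gy j).2 // lnmpow_clmask ?subrr //; exact: (b_class dj).1.
Qed.

End SolutionSet.

Unset Implicit Arguments. Set Strict Implicit.

Theorem theorem4 (R : realType) (l n m L : nat)
    (A : 'M[R]_(l, m)) (B : 'M[R]_(n, m)) (cls : 'I_m -> 'I_L)
    (* ker A = ker A_1 x ... x ker A_L *)
    (hker : forall y : 'rV[R]_m,
        A *m y^T = 0 <-> forall j, A *m (clmask cls j y)^T = 0)
    (* (i) *)
    (hi : exists y : 'rV[R]_m, (forall i, 0 < y 0 i) /\ A *m y^T = 0)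
    (* (ii) *)
    (hii : dimD B cls = (\sum_(j < L) dimDj B cls j)%N)
    (* (iii), dimension part: d_j = dim P_j <= 1 *)
    (hiii_dim : forall j, affdim (Pj A cls j) (dimDj B cls j) /\ (dimDj B cls j <= 1)%N)
    (* endpoints y^{j,1}, y^{j,2} of the segment closure(P_j) *)
    (y1 y2 : 'I_L -> 'rV[R]_m)
    (hend : forall j, dimDj B cls j = 1%N ->
        y1 j != y2 j /\
        forall y, Pbarj A cls j y <->
          exists t : R, 0 <= t <= 1 /\ y = (1 - t) *: y1 j + t *: y2 j)
    (* b^j spans ker (B_j ; 1^T) *)
    (b : 'I_L -> 'rV[R]_m)
    (hb : forall j, dimDj B cls j = 1%N -> (b j == Djsp B cls j)%MS)
    (* (iii), sign part *)
    (hiii_sign : forall j, dimDj B cls j = 1%N ->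
        let om := size (qvals cls j (y1 j) (y2 j)) in
        let bt := btilde cls j (y1 j) (y2 j) (b j) in
        ((forall k, (k < om.-1)%N -> 0 <= \sum_(k' < k.+1) bt k') \/
         (forall k, (k < om.-1)%N -> \sum_(k' < k.+1) bt k' <= 0)) /\
        bt 0%N * bt om.-1 < 0) :
  forall c : 'rV[R]_m, (forall i, 0 < c 0 i) ->
    exists! y : 'rV[R]_m, Yc A B cls c y.
Proof.
move=> c c_gt0.
have dimDj_le1 j := (hiii_dim j).2.
pose G j y := Pj A cls j y /\ (dimDj B cls j = 1%N -> lnmpow y (b j) = lnmpow c (b j)).
have G_mask j y : G j y -> clmask cls j y = y by case=> [[y_off _ _ _] _]; exact: clmask_id.
have G_uniq j : exists! y, G j y.
  case dj: (dimDj B cls j) (dimDj_le1 j) (hiii_dim j).1 => [|[|k]] // _ Pj_dim.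
    have [y [Py y_uniq]] := affdim0_singleton Pj_dim.
    by exists y; split=> [|y' [Py' _]]; [split => //; rewrite dj | exact: y_uniq].
  have [y12 seg] := hend j dj; have [b_off b_sum] := b_class hb dj.
  have [y [[Py hy] y_uniq]] := class_lnmpow_bij y12 seg Pj_dim.1 b_off b_sum
    (hiii_sign j dj) (lnmpow c (b j)).
  by exists y; split=> [|y' [Py' hy']]; [by split | apply: y_uniq; split; last exact: hy'].
have [y [Gy y_uniq]] := exists_unique_classwise G_mask G_uniq.
have Yc_iff w := Yc_classwise A hii dimDj_le1 hb w c_gt0.
by exists y; split=> [|w /Yc_iff]; [exact/Yc_iff | exact: y_uniq].
Qed.
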